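(* Let $N\ge 2$ and let $a<b$ be coprime positive integers. Suppose $V\subset S_{b-a}$ is an $N$-dimensional subspace such that $\mu_V(W)\ge b/a$ for every nonzero subspace $W\subset S_{a-1}$. Then $b/a\in\Psi_N$.
   Context: Over $\mathbb{C}$, $S_a$ denotes the space of polynomials in one variable $u$ of degree at most $a$. For subspaces $V,W$, $V\cdot W$ is the span of products, and $\mu_V(W)=\dim(V\cdot W)/\dim W$. Define $\theta(x)=N-x^{-1}$ with $\theta(\infty)=N$, $\psi_N=\frac{N+\sqrt{N^2-4}}{2}$, and $\Psi_N=\{\alpha\in\mathbb{Q}:1<\alpha<\psi_N\}\cup\{\theta^i(\infty):i\ge 0\}$. *)

From HB Require Import structures.
From mathcomp Require Import all_boot all_order all_algebra all_field.
Set Implicit Arguments. Unset Strict Implicit. Unset Printing Implicit Defensive.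
Import Order.TTheory GRing.Theory Num.Theory.
Local Open Scope ring_scope.

(* Polynomials of degree < n are encoded by their coefficient row vectors
   in 'rV_n; S_a corresponds to 'rV_(a.+1).  A subspace of S_a is the row
   space of a matrix with a.+1 columns (mxalgebra), its dimension is \rank. *)
Definition rowpoly (C : numClosedFieldType) (n : nat) (r : 'rV[C]_n) : {poly C} :=
  \poly_(i < n) (if @insub _ (fun k => k < n)%N 'I_n i is Some j then r 0 j else 0).

Definition polyrow (C : numClosedFieldType) (n : nat) (p : {poly C}) : 'rV[C]_n :=
  \row_(i < n) p`_i.

(* V . W : span of the products v*w, v a row of V, w a row of W;
   the products of spanning vectors span V.W. Encoded with n columns. *)
Definition prodsp (C : numClosedFieldType) (n m1 n1 m2 n2 : nat)
  (V : 'M[C]_(m1, n1)) (W : 'M[C]_(m2, n2)) : 'M[C]_n :=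
  (\sum_(i < m1) \sum_(j < m2)
     <<polyrow n (rowpoly (row i V) * rowpoly (row j W))>>)%MS.

Definition mu (C : numClosedFieldType) (n m1 n1 m2 n2 : nat)
  (V : 'M[C]_(m1, n1)) (W : 'M[C]_(m2, n2)) : rat :=
  (\rank (prodsp n V W))%:R / (\rank W)%:R.

(* theta(x) = N - x^-1 on Q u {oo}, with None standing for oo. *)
Definition theta (N : nat) (x : option rat) : option rat :=
  match x with
  | None => Some N%:R
  | Some q => Some (N%:R - q^-1)
  end.

Definition theta_iter (N i : nat) : option rat := iter i (theta N) None.

Definition psiN (N : nat) : algC := (N%:R + sqrtC (N%:R ^+ 2 - 4)) / 2.

(* Psi_N restricted to its rational (finite) part; membership of q : rat. *)
Definition inPsi (N : nat) (q : rat) : Prop :=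
  (1 < q /\ ratr q < psiN N) \/ exists i : nat, theta_iter N i = Some q.

(* Multiplication by the N spanning polynomials v_i of V gives N linear maps
   F_i : S_(a-1) -> S_(b-1), i.e. a representation of the N-Kronecker quiver
   of dimension vector (a, b).  The slope condition mu_V(W) >= b/a makes it
   Schur: an intertwining pair (A, B), A F_i = F_i B, is scalar, because the
   kernels and images of A - l, B - l (l an eigenvalue of A) give two
   subspaces whose slopes, added up, force equality, which coprimality of a
   and b rules out.  Counting dimensions of the space of intertwiners then
   yields a^2 + b^2 <= N a b + 1.  For coprime a < b this leaves the Markov
   type equation a^2 + b^2 = N a b + 1, whose solutions Vieta jumping reduces
   to (1, N), producing the orbit of infinity under theta, or the inequality
   a^2 + b^2 < N a b, i.e. b/a < psi_N. *)
From HB Require Import structures.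
From mathcomp Require Import all_boot all_order all_algebra all_field.
From mathcomp Require Import zify ring lra.
Import Order.TTheory GRing.Theory Num.Theory.
Local Open Scope ring_scope.
Set Implicit Arguments. Unset Strict Implicit. Unset Printing Implicit Defensive.

Section Intertwiners.
Variables (F : fieldType) (N a b : nat) (Fs : 'I_N -> 'M[F]_(a, b)).

(* A pair (A, B) is encoded as the row vector [mxvec A | mxvec B]. *)
Definition intertwine_defect (u : 'rV[F]_(a * a + b * b)) : 'rV[F]_(N * (a * b)) :=
  mxvec (\matrix_(i < N) mxvec ((vec_mx (lsubmx u) : 'M_(a, a)) *m Fs i
                                - Fs i *m (vec_mx (rsubmx u) : 'M_(b, b)))).

Lemma intertwine_defect_is_linear : linear intertwine_defect.
Proof.
move=> k u v; rewrite /intertwine_defect -linearP; congr mxvec.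
apply/matrixP => i j; rewrite !mxE !linearP /= mulmxDl -scalemxAl addrACA.
by rewrite -scalerDr linearP !mxE.
Qed.

HB.instance Definition _ :=
  GRing.isLinear.Build F 'rV_(a * a + b * b) 'rV_(N * (a * b)) *:%R
    intertwine_defect intertwine_defect_is_linear.

Lemma scalar_intertwiners_dim_bound :
  (forall (A : 'M[F]_a) (B : 'M[F]_b), (forall i, A *m Fs i = Fs i *m B) ->
     exists c, A = c%:M /\ B = c%:M) ->
  (a * a + b * b <= N * (a * b) + 1)%N.
Proof.
move=> scalarAB; pose D := lin1_mx intertwine_defect.
pose one : 'rV[F]_(a * a + b * b) := row_mx (mxvec 1%:M) (mxvec 1%:M).
have ker_le1 : (\rank (kermx D) <= 1)%N.
  apply: leq_trans (rank_leq_row one); apply/mxrankS/row_subP => k.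
  set u := row k (kermx D).
  have /(can_inj mxvecK) Du0 : intertwine_defect u = mxvec 0.
    by rewrite linear0 -mul_rV_lin1 -row_mul mulmx_ker row0.
  have [|c [eA eB]] := scalarAB (vec_mx (lsubmx u)) (vec_mx (rsubmx u)).
    move=> i; apply/eqP; rewrite -subr_eq0; apply/eqP/(can_inj mxvecK).
    by move/(congr1 (row i)): Du0; rewrite rowK row0 linear0.
  have -> : u = c *: one.
    rewrite -(hsubmxK u) -[lsubmx u]vec_mxK -[rsubmx u]vec_mxK eA eB.
    by rewrite scale_row_mx -!linearZ /= !scalemx1.
  exact: scalemx_sub.
move: ker_le1; rewrite mxrank_ker leq_subLR => /leq_trans; apply.
by rewrite leq_add2r rank_leq_col.
Qed.

End Intertwiners.

(* For r, s the ranks of A - l and B - l, the kernel and image slope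
   inequalities sum to an equality; coprimality then forces r = 0. *)
Lemma coprime_slopes_eq0 a b r s : coprime a b -> (r < a)%N -> (s <= b)%N ->
  (b * (a - r) <= (b - s) * a)%N -> (b * r <= s * a)%N -> r = 0%N /\ s = 0%N.
Proof.
move=> co_ab lt_ra le_sb slope_ker slope_im.
have slope_eq : (b * (a - r) = (b - s) * a)%N by nia.
have [r0|r_gt0] := posnP r; first by subst r; split=> //; nia.
have : (a %| a - r)%N by rewrite -(Gauss_dvdr _ co_ab) slope_eq dvdn_mull.
by move/dvdn_leq; lia.
Qed.

Section MultiplicationMaps.
Variable C : numClosedFieldType.

Lemma rowpolyE n (r : 'rV[C]_n) : rowpoly r = \sum_(k < n) r 0 k *: 'X^k.
Proof.
rewrite /rowpoly poly_def; apply: eq_bigr => k _.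
by case: insubP => [j _ /val_inj -> //|]; rewrite ltn_ord.
Qed.

(* The matrix of w |-> v * w on S_(a-1), products truncated to b coefficients. *)
Definition polymul_mx n a b (v : 'rV[C]_n) : 'M[C]_(a, b) :=
  \matrix_(k < a) polyrow b ('X^k * rowpoly v).
Arguments polymul_mx {n} a b v.

Lemma polyrow_mul n a b (v : 'rV[C]_n) (w : 'rV[C]_a) :
  polyrow b (rowpoly v * rowpoly w) = w *m polymul_mx a b v.
Proof.
apply/rowP => j; rewrite !mxE (rowpolyE w) mulr_sumr coef_sum.
by apply: eq_bigr => k _; rewrite !mxE -scalerAr coefZ (mulrC 'X^k).
Qed.

Lemma prodsp_sub n m1 n1 m2 a p (V : 'M[C]_(m1, n1)) (W : 'M[C]_(m2, a))
    (K : 'M[C]_(p, n)) :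
  (forall i, W *m polymul_mx a n (row i V) <= K)%MS -> (prodsp n V W <= K)%MS.
Proof.
move=> WVK; apply/sumsmx_subP => i _; apply/sumsmx_subP => j _.
by rewrite genmxE polyrow_mul -row_mul (submx_trans (row_sub _ _)).
Qed.

Section Slope.
Variables (N n a b : nat) (V : 'M[C]_(N, n)).
Hypothesis a_gt0 : (0 < a)%N.
Hypothesis slope_V : forall (m : nat) (W : 'M[C]_(m, a)), (0 < \rank W)%N ->
  b%:R / a%:R <= mu b V W.

Lemma slope_submx m p (W : 'M[C]_(m, a)) (K : 'M[C]_(p, b)) :
  (forall i, W *m polymul_mx a b (row i V) <= K)%MS ->
  (b * \rank W <= \rank K * a)%N.
Proof.
move=> WVK; have [->|W_gt0] := posnP (\rank W); first by rewrite muln0.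
have := slope_V W_gt0; rewrite /mu ler_pdivrMr ?ltr0n // mulrAC.
rewrite ler_pdivlMr ?ltr0n // -!natrM ler_nat => /leq_trans; apply.
by rewrite leq_mul2r mxrankS ?orbT // prodsp_sub.
Qed.

Lemma intertwiner_scalar (A : 'M[C]_a) (B : 'M[C]_b) : coprime a b ->
  (forall i, A *m polymul_mx a b (row i V) = polymul_mx a b (row i V) *m B) ->
  exists c, A = c%:M /\ B = c%:M.
Proof.
move=> co_ab AB; have [l] : exists l, root (char_poly A) l.
  by apply/closed_rootP; rewrite size_char_poly eqSS -lt0n.
rewrite -eigenvalue_root_char => eig_l; exists l.
set A' := A - l%:M; set B' := B - l%:M.
have AB' i : A' *m polymul_mx a b (row i V) = polymul_mx a b (row i V) *m B'.
  by rewrite mulmxBl mulmxBr mul_scalar_mx mul_mx_scalar AB.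
have ker_slope : (b * (a - \rank A') <= (b - \rank B') * a)%N.
  rewrite -!mxrank_ker; apply: slope_submx => i; apply/sub_kermxP.
  by rewrite -mulmxA -AB' mulmxA mulmx_ker mul0mx.
have im_slope : (b * \rank A' <= \rank B' * a)%N.
  by apply: slope_submx => i; rewrite AB' submxMl.
have rA_lt_a : (\rank A' < a)%N.
  by rewrite ltnNge -subn_eq0 -mxrank_ker mxrank_eq0.
have [/eqP rA0 /eqP rB0] :=
  coprime_slopes_eq0 co_ab rA_lt_a (rank_leq_row B') ker_slope im_slope.
by move: rA0 rB0; rewrite !mxrank_eq0 !subr_eq0 => /eqP -> /eqP ->.
Qed.

End Slope.
End MultiplicationMaps.

Lemma theta_iter_markov (N a b : nat) : (0 < a < b)%N ->
  (a * a + b * b = N * (a * b) + 1)%N ->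
  exists i, theta_iter N i = Some (b%:R / a%:R).
Proof.
elim/ltn_ind: a b => a IH b /andP[a_gt0 lt_ab] markov.
(* Vieta jumping: c = N a - b is the other root of t^2 - N a t + a^2 - 1. *)
have le_b_Na : (b <= N * a)%N by nia.
set c := (N * a - b)%N.
have [c0|c_gt0] := posnP c.
  have [a1 bN] : a = 1%N /\ b = N by nia.
  by exists 1%N; rewrite a1 bN divr1.
have [i theta_i] : exists i, theta_iter N i = Some (a%:R / c%:R).
  by apply: IH; nia.
exists i.+1; rewrite /theta_iter iterS -/(theta_iter N i) theta_i /= invf_div.
have a_neq0 : a%:R != 0 :> rat by rewrite pnatr_eq0 -lt0n.
by congr Some; rewrite natrB // natrM mulrBl mulfK // opprB addrC subrK.
Qed.

Lemma coprime_markov0_neq (N a b : nat) : (0 < a < b)%N -> coprime a b ->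
  (a * a + b * b != N * (a * b))%N.
Proof.
move=> /andP[a_gt0 lt_ab] co_ab; apply/eqP => markov.
have a_dvd_b : (a %| b)%N.
  rewrite -(Gauss_dvdr _ co_ab) -(dvdn_addr _ (dvdn_mulr a (dvdnn a))).
  by rewrite markov dvdn_mull ?dvdn_mulr.
have a1 : a = 1%N by apply/eqP; rewrite -(gcdn_idPl a_dvd_b).
move: markov lt_ab; rewrite a1 !mul1n => markov lt_1b.
have : (b %| 1 + b * b)%N by rewrite markov dvdn_mull.
by rewrite dvdn_addl ?dvdn_mull // dvdn1 => /eqP b1; rewrite b1 in lt_1b.
Qed.

Lemma ratr_lt_psiN (N : nat) (q : rat) : q ^+ 2 + 1 < N%:R * q ->
  ratr q < psiN N.
Proof.
move=> q_between_roots; pose y := 2 * q - N%:R; pose d : rat := N%:R ^+ 2 - 4.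
have y2_lt_d : y ^+ 2 < d by rewrite /y /d; nra.
have d_gt0 : 0 < d by apply: le_lt_trans y2_lt_d; rewrite sqr_ge0.
have y_lt_sqrt_d : ratr y < sqrtC (ratr d) :> algC.
  have [y_le0|y_gt0] := lerP y 0.
    by apply: le_lt_trans (_ : ratr y <= 0) _; rewrite ?lerq0 ?sqrtC_gt0 ?ltr0q.
  rewrite -[ratr y]sqrCK ?ler0q ?(ltW y_gt0) // -rmorphXn.
  by rewrite ltr_sqrtC ?nnegrE ?ler0q ?sqr_ge0 ?(ltW d_gt0) // ltr_rat.
move: y_lt_sqrt_d; rewrite /psiN /y /d !(rmorphB, rmorphM, rmorphXn, rmorph_nat) /=.
by rewrite -expr2 ltrBlDr ltr_pdivlMr ?ltr0n // mulrC addrC.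
Qed.

Lemma inPsi_of_markov_bound (N a b : nat) : (0 < a < b)%N -> coprime a b ->
  (a * a + b * b <= N * (a * b) + 1)%N -> inPsi N (b%:R / a%:R).
Proof.
move=> ab co_ab; have [a_gt0 lt_ab] := andP ab; rewrite /inPsi.
rewrite leq_eqVlt addn1 ltnS leq_eqVlt.
case/or3P=> [/eqP markov|markov0|lt_markov].
- by right; apply: theta_iter_markov; rewrite // addn1.
- by have := coprime_markov0_neq N ab co_ab; rewrite markov0.
left; split; first by rewrite ltr_pdivlMr ?ltr0n // mul1r ltr_nat.
apply: ratr_lt_psiN; have a_neq0 : a%:R != 0 :> rat by rewrite pnatr_eq0 -lt0n.
rewrite -(@ltr_pM2r _ (a * a)%:R) ?ltr0n ?muln_gt0 ?a_gt0 //.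
have -> : ((b%:R / a%:R) ^+ 2 + 1) * (a * a)%:R = (a * a + b * b)%:R :> rat.
  by rewrite natrD !natrM; field.
have -> : N%:R * (b%:R / a%:R) * (a * a)%:R = (N * (a * b))%:R :> rat.
  by rewrite !natrM; field.
by rewrite ltr_nat.
Qed.

Theorem mainTheorem10 (C : numClosedFieldType) (N a b : nat)
  (V : 'M[C]_(N, (b - a).+1)) :
  (2 <= N)%N -> (0 < a)%N -> (a < b)%N -> coprime a b ->
  \rank V = N ->
  (forall (m : nat) (W : 'M[C]_(m, a)), (0 < \rank W)%N ->
     b%:R / a%:R <= mu b V W) ->
  inPsi N (b%:R / a%:R).
Proof.
move=> _ a_gt0 lt_ab co_ab _ slope_V.
apply: inPsi_of_markov_bound; rewrite ?a_gt0 //.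
apply: (scalar_intertwiners_dim_bound (Fs := fun i => polymul_mx a b (row i V))).
by move=> A B; apply: intertwiner_scalar.
Qed.
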